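(* Let $A$ be an MV-algebra and $d$ an isotone $(\odot,\vee)$-derivation on $A$ with $d(1)\in\mathbf{B}(A)$. Then $d\circ d=d$.
   Context: An MV-algebra is an algebra $(A,\oplus,{}^*,0)$ of type $(2,1,0)$ satisfying: $x\oplus(y\oplus z)=(x\oplus y)\oplus z$, $x\oplus y=y\oplus x$, $x\oplus 0=x$, $x^{**}=x$, $x\oplus 0^*=0^*$, $(x^*\oplus y)^*\oplus y=(y^*\oplus x)^*\oplus x$. Put $1=0^*$ and $x\odot y=(x^*\oplus y^* )^*$. The natural order is $x\le y$ iff $x^*\oplus y=1$, with lattice operations $x\vee y=(x\odot y^* )\oplus y$, $x\wedge y=x\odot(x^*\oplus y)$. The Boolean center is $\mathbf{B}(A)=\{x\in A: x\oplus x=x\}$. A $(\odot,\vee)$-derivation on $A$ is a map $d:A\to A$ with $d(x\odot y)=(d(x)\odot y)\vee(x\odot d(y))$ for all $x,y\in A$; it is isotone if $x\le y$ implies $d(x)\le d(y)$. *)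

Record MVAlgebra := {
  mv_car :> Type;
  mv_oplus : mv_car -> mv_car -> mv_car;
  mv_neg : mv_car -> mv_car;
  mv_zero : mv_car;
  mv_assoc : forall x y z, mv_oplus x (mv_oplus y z) = mv_oplus (mv_oplus x y) z;
  mv_comm : forall x y, mv_oplus x y = mv_oplus y x;
  mv_zero_r : forall x, mv_oplus x mv_zero = x;
  mv_negneg : forall x, mv_neg (mv_neg x) = x;
  mv_one_abs : forall x, mv_oplus x (mv_neg mv_zero) = mv_neg mv_zero;
  mv_luk : forall x y,
    mv_oplus (mv_neg (mv_oplus (mv_neg x) y)) y
    = mv_oplus (mv_neg (mv_oplus (mv_neg y) x)) x
}.

Section MVOps.
Variable A : MVAlgebra.

Definition mv_one : A := mv_neg A (mv_zero A).
Definition mv_odot (x y : A) : A :=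
  mv_neg A (mv_oplus A (mv_neg A x) (mv_neg A y)).
Definition mv_le (x y : A) : Prop := mv_oplus A (mv_neg A x) y = mv_one.
Definition mv_join (x y : A) : A := mv_oplus A (mv_odot x (mv_neg A y)) y.
Definition mv_meet (x y : A) : A := mv_odot x (mv_oplus A (mv_neg A x) y).

Definition mv_boolean (x : A) : Prop := mv_oplus A x x = x.

Definition odot_join_derivation (d : A -> A) : Prop :=
  forall x y, d (mv_odot x y) = mv_join (mv_odot (d x) y) (mv_odot x (d y)).

Definition isotone (d : A -> A) : Prop :=
  forall x y, mv_le x y -> mv_le (d x) (d y).
End MVOps.

Arguments mv_one {A}.
Arguments mv_odot {A}.
Arguments mv_le {A}.
Arguments mv_join {A}.
Arguments mv_meet {A}.
Arguments mv_boolean {A}.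
Arguments odot_join_derivation {A}.
Arguments isotone {A}.


(* Two general facts hold:
   (1) d 0 = 0 and d x <= x for every x: expanding d (x odot x^* ) = d 0 = 0
       shows that the join (d x odot x^* ) v (x odot d x^* ) is 0, so its
       first argument d x odot x^* vanishes, which is exactly d x <= x;
   (2) if d 1 is Boolean then d fixes every y <= d 1: expanding
       d (y odot 1) gives d y = d y v (y odot d 1), and y odot d 1 = y
       because multiplying by a Boolean element above y does not change y;
       hence d y = d y v y = y by (1).
   The corollary follows: by isotonicity d x <= d 1, so d (d x) = d x by (2). *)

Local Notation "x +' y" := (mv_oplus _ x y) (at level 50, left associativity).
Local Notation "x ^*" := (mv_neg _ x) (at level 2, left associativity).

Section MVArithmetic.
Context {A : MVAlgebra}.
Implicit Types x y z a b : A.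

Lemma neg_one : (@mv_one A)^* = mv_zero A.
Proof. apply mv_negneg. Qed.

Lemma oplus_zero_l x : mv_zero A +' x = x.
Proof. rewrite mv_comm; apply mv_zero_r. Qed.

Lemma oplus_neg_l x : x^* +' x = mv_one.
Proof.
  pose proof (mv_luk A x mv_one) as H.
  rewrite mv_one_abs, neg_one, oplus_zero_l in H. symmetry; exact H.
Qed.

Lemma odot_comm x y : mv_odot x y = mv_odot y x.
Proof. unfold mv_odot; rewrite mv_comm; reflexivity. Qed.

Lemma odot_assoc x y z : mv_odot (mv_odot x y) z = mv_odot x (mv_odot y z).
Proof. unfold mv_odot; rewrite !mv_negneg, mv_assoc; reflexivity. Qed.

Lemma odot_one_r x : mv_odot x mv_one = x.
Proof. unfold mv_odot; rewrite neg_one, mv_zero_r, mv_negneg; reflexivity. Qed.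

Lemma odot_zero_r x : mv_odot x (mv_zero A) = mv_zero A.
Proof.
  unfold mv_odot; change (mv_neg A (mv_zero A)) with (@mv_one A).
  rewrite mv_one_abs; apply neg_one.
Qed.

Lemma odot_neg_r x : mv_odot x x^* = mv_zero A.
Proof. unfold mv_odot; rewrite mv_negneg, oplus_neg_l; apply neg_one. Qed.

Lemma oplus_eq_zero_r {x y} : x +' y = mv_zero A -> y = mv_zero A.
Proof.
  intro Hxy.
  assert (Hny : y^* = mv_one).
  { rewrite <- (mv_zero_r A y^*), <- Hxy, (mv_comm _ x y), mv_assoc, oplus_neg_l.
    rewrite mv_comm; apply mv_one_abs. }
  rewrite <- (mv_negneg A y), Hny; apply neg_one.
Qed.

End MVArithmetic.

Section MVOrder.
Context {A : MVAlgebra}.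
Implicit Types x y a b : A.

Lemma le_odot_neg {x y} : mv_odot x y^* = mv_zero A -> mv_le x y.
Proof.
  unfold mv_le, mv_odot; rewrite mv_negneg; intro H.
  rewrite <- (mv_negneg A (x^* +' y)), H; reflexivity.
Qed.

Lemma join_comm x y : mv_join x y = mv_join y x.
Proof. unfold mv_join, mv_odot; rewrite !mv_negneg; apply mv_luk. Qed.

Lemma join_eq_zero_l {x y} : mv_join x y = mv_zero A -> x = mv_zero A.
Proof. rewrite join_comm; apply oplus_eq_zero_r. Qed.

Lemma le_join {x y} : mv_le x y -> mv_join x y = y.
Proof.
  unfold mv_le, mv_join, mv_odot; rewrite mv_negneg; intro H.
  rewrite H, neg_one; apply oplus_zero_l.
Qed.

Lemma meet_comm a b : mv_meet a b = mv_meet b a.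
Proof.
  unfold mv_meet, mv_odot.
  pose proof (mv_luk A b^* a^*) as H; rewrite !mv_negneg in H.
  rewrite (mv_comm _ a^* b), (mv_comm _ b^* a), (mv_comm _ a^*), (mv_comm _ b^*), H.
  reflexivity.
Qed.

Lemma le_meet {a b} : mv_le a b -> mv_meet a b = a.
Proof. unfold mv_meet, mv_le; intro H; rewrite H; apply odot_one_r. Qed.

Lemma le_antisym {x y} : mv_le x y -> mv_le y x -> x = y.
Proof.
  intros Hxy Hyx.
  rewrite <- (le_join Hxy), join_comm; symmetry; apply le_join; exact Hyx.
Qed.

(* A Boolean element b is odot-idempotent: b odot b <= b always, and
   b <= b odot b because b odot (b odot b)^* = b^* odot (b + b) = b^* odot b = 0. *)
Lemma boolean_odot_idem {b} : mv_boolean b -> mv_odot b b = b.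
Proof.
  unfold mv_boolean; intro Hb.
  apply le_antisym; apply le_odot_neg.
  - rewrite odot_assoc, odot_neg_r; apply odot_zero_r.
  - pose proof (meet_comm b b^*) as Hm; unfold mv_meet in Hm.
    rewrite mv_negneg, Hb, (odot_comm b^*), odot_neg_r in Hm.
    unfold mv_odot at 2; rewrite mv_negneg; exact Hm.
Qed.

(* Multiplying by a Boolean element b leaves every a <= b unchanged:
   a = b odot (b^* + a), and b odot b = b. *)
Lemma odot_boolean_le {a b} : mv_le a b -> mv_boolean b -> mv_odot a b = a.
Proof.
  intros Hab Hb.
  rewrite <- (le_meet Hab), meet_comm; unfold mv_meet.
  rewrite odot_comm, <- odot_assoc, boolean_odot_idem by exact Hb.
  reflexivity.
Qed.

End MVOrder.

Section Derivations.
Context {A : MVAlgebra}.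
Context {d : A -> A} (d_der : odot_join_derivation d).

Lemma derivation_zero : d (mv_zero A) = mv_zero A.
Proof.
  pose proof (d_der (mv_zero A) (mv_zero A)) as H.
  rewrite !odot_zero_r, odot_comm, odot_zero_r in H.
  rewrite H; unfold mv_join; rewrite odot_comm, odot_zero_r; apply mv_zero_r.
Qed.

Lemma derivation_le x : mv_le (d x) x.
Proof.
  apply le_odot_neg, (join_eq_zero_l (y := mv_odot x (d x^*))).
  rewrite <- d_der, odot_neg_r; apply derivation_zero.
Qed.

Lemma derivation_fix_below_one {y} :
  mv_boolean (d mv_one) -> mv_le y (d mv_one) -> d y = y.
Proof.
  intros Hb Hy.
  pose proof (d_der y mv_one) as H.
  rewrite !odot_one_r, (odot_boolean_le Hy Hb) in H.
  rewrite H; apply le_join, derivation_le.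
Qed.

End Derivations.

Theorem corollary3p23 (A : MVAlgebra) (d : A -> A) :
  odot_join_derivation d -> isotone d -> mv_boolean (d mv_one) ->
  forall x : A, d (d x) = d x.
Proof.
  intros d_der d_iso d1_bool x.
  apply (derivation_fix_below_one d_der d1_bool).
  apply d_iso; unfold mv_le; apply mv_one_abs.
Qed.
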